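(* For $i\in\mathbb{Z}_{>0}$ and $\epsilon>0$, the inclusion $\mathbb{CP}^n\times\mathbb{CP}^n\times\{i\pi+\epsilon\}\to Z_i$ is a homotopy equivalence.
   Context: $\mathbb{CP}^n$ has the Fubini–Study metric (Kähler form $\sum2\sqrt{-1}h_{ij}dz_i\wedge d\bar z_j$, $h_{ij}=\frac{(1+\sum_k|z_k|^2)\delta_{ij}-\bar z_iz_j}{(1+\sum_k|z_k|^2)^2}$), geodesic distance $\mathrm{dist}$, diameter $\pi$. For $x\in\mathbb{CP}^n$, $D_x=\{y\mid\mathrm{dist}(x,y)=\pi\}$. For $i>0$, $Z_i\subset\mathbb{CP}^n\times\mathbb{CP}^n\times\mathbb{R}$ is $\{(x,y,t)\mid\mathrm{dist}(x,y)<t-(i-1)\pi\}$ if $i$ is odd and $\{(x,y,t)\mid\mathrm{dist}(x,D_y)<t-(i-1)\pi\}$ if $i$ is even. *)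

From HB Require Import structures.
From mathcomp Require Import all_boot all_order all_algebra.
From mathcomp Require Import all_classical all_reals all_analysis.
Set Implicit Arguments.
Unset Strict Implicit.
Unset Printing Implicit Defensive.
Import Order.TTheory GRing.Theory Num.Theory.
Import numFieldNormedType.Exports.
Local Open Scope classical_set_scope.
Local Open Scope ring_scope.

Definition continuous_on {X Y : topologicalType} (A : set X) (f : X -> Y) :=
  continuous (fun a : set_type A => f (set_val a)).

Definition unit_interval (R : realType) : set R := [set t | 0 <= t <= 1].

Definition homotopic_on {R : realType} {X Y : topologicalType}
    (A : set X) (B : set Y) (f g : X -> Y) :=
  exists H : X -> R -> Y,
    continuous (fun p : set_type A * set_type (@unit_interval R) =>
                  H (set_val p.1) (set_val p.2)) /\
    (forall (x : X) (t : R), A x -> @unit_interval R t -> B (H x t)) /\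
    (forall x, A x -> H x (0 : R) = f x /\ H x (1 : R) = g x).

Definition homotopy_equivalence_on (R : realType) {X Y : topologicalType}
    (A : set X) (B : set Y) (f : X -> Y) :=
  (forall x, A x -> B (f x)) /\ continuous_on A f /\
  exists g : Y -> X,
    (forall y, B y -> A (g y)) /\ continuous_on B g /\
    @homotopic_on R X X A A (g \o f) id /\
    @homotopic_on R Y Y B B (f \o g) id.

(* A point of CP^n (n = dimension) is represented by the Hermitian rank-one
   projector v v^* (v unit vector in C^(n+1)), written as the pair (A, B)
   of real (n+1)x(n+1) matrices with v v^* = A + sqrt(-1) B.
   For v = x + sqrt(-1) y  (x, y real row vectors):
     A = x^T x + y^T y,  B = y^T x - x^T y.
   CP^n carries the subspace topology of 'M_(n+1) * 'M_(n+1); this embedding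
   is a homeomorphism onto its image from the usual quotient topology. *)

Definition cpt (R : realType) (n : nat) : Type :=
  ('M[R]_(n.+1) * 'M[R]_(n.+1))%type.

Definition CP (R : realType) (n : nat) : set (cpt R n) :=
  [set P | exists x y : 'rV[R]_(n.+1),
      \sum_(k < n.+1) (x 0 k ^+ 2 + y 0 k ^+ 2) = 1 /\
      P = (x^T *m x + y^T *m y, y^T *m x - x^T *m y)].
Arguments CP : clear implicits.

(* Fubini–Study geodesic distance (normalization with diameter pi):
   dist([u],[v]) = 2 arccos |<u,v>|  for unit u, v, and
   |<u,v>|^2 = Re tr((A+iB)(C+iD)) = tr(AC) - tr(BD). *)
Definition fs_dist (R : realType) (n : nat) (P Q : cpt R n) : R :=
  2 * acos (Num.sqrt (\tr (P.1 *m Q.1 - P.2 *m Q.2))).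

Definition Dset (R : realType) (n : nat) (y : cpt R n) : set (cpt R n) :=
  [set z | CP R n z /\ fs_dist y z = pi].

Definition dist_D (R : realType) (n : nat) (x y : cpt R n) : R :=
  inf [set fs_dist x z | z in Dset y].

Definition Zset (R : realType) (n i : nat) : set (cpt R n * cpt R n * R) :=
  [set p | CP R n p.1.1 /\ CP R n p.1.2 /\
     (if odd i then fs_dist p.1.1 p.1.2 < p.2 - (i%:R - 1) * pi
      else dist_D p.1.1 p.1.2 < p.2 - (i%:R - 1) * pi)].
Arguments Zset : clear implicits.

Definition slice (R : realType) (n : nat) (c : R) : set (cpt R n * cpt R n * R) :=
  [set p | CP R n p.1.1 /\ CP R n p.1.2 /\ p.2 = c].
Arguments slice : clear implicits.

From HB Require Import structures.
From mathcomp Require Import all_boot all_order all_algebra.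
From mathcomp Require Import all_classical all_reals all_analysis.
From mathcomp Require Import ring lra.
Import Order.TTheory GRing.Theory Num.Theory.
Import numFieldNormedType.Exports.
Local Open Scope classical_set_scope.
Local Open Scope ring_scope.

(* Both dist(x, y) and dist(x, D_y) are at most pi, so Z_i is the strict
   epigraph over CP^n x CP^n of a function d + (i - 1) pi bounded by i pi: every
   vertical fibre is an open ray containing i pi + eps. Sliding the last
   coordinate linearly to i pi + eps stays inside each ray and deformation
   retracts Z_i onto the slice; no continuity of d is needed. *)

Lemma ltr_conv (R : realDomainType) (a u v s : R) :
  a < u -> a < v -> 0 <= s <= 1 -> a < (1 - s) * u + s * v.
Proof.
move=> au av /andP[s0 s1].
have -> : (1 - s) * u + s * v = a + ((1 - s) * (u - a) + s * (v - a)) by ring.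
rewrite ltrDl.
have [->|s_neq0] := eqVneq s 0; first by rewrite subr0 mul1r mul0r addr0 subr_gt0.
apply: ltr_wpDl; first by rewrite mulr_ge0 // subr_ge0 // ltW.
by rewrite mulr_gt0 ?subr_gt0 // lt_neqAle eq_sym s_neq0.
Qed.

Lemma continuous_pair (T U V : topologicalType) (f : T -> U) (g : T -> V) :
  continuous f -> continuous g -> continuous (fun t => (f t, g t)).
Proof. by move=> f_cont g_cont t; exact: cvg_pair (f_cont t) (g_cont t). Qed.

Lemma continuous_continuous_on (X Y : topologicalType) (A : set X) (f : X -> Y) :
  continuous f -> continuous_on A f.
Proof.
by move=> f_cont a; apply: continuous_comp; [exact: initial_continuous | exact: f_cont].
Qed.

Lemma continuous_subspace_uncurry {R : realType} {X Y : topologicalType}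
    {A : set X} {I : set R} {H : X -> R -> Y} :
  continuous (fun q : X * R => H q.1 q.2) ->
  continuous (fun p : set_type A * set_type I => H (set_val p.1) (set_val p.2)).
Proof.
move=> H_cont p; apply: (continuous_comp (g := fun q : X * R => H q.1 q.2)
  (f := fun p : set_type A * set_type I => (set_val p.1, set_val p.2))); last exact: H_cont.
apply: continuous_pair => {}p.
  by apply: (continuous_comp (f := fst)); [exact: cvg_fst | exact: initial_continuous].
by apply: (continuous_comp (f := snd)); [exact: cvg_snd | exact: initial_continuous].
Qed.

Lemma homotopic_on_eq_id (R : realType) (X : topologicalType) (A : set X) (f : X -> X) :
  (forall x, A x -> f x = x) -> @homotopic_on R X X A A f id.
Proof.
move=> fE; exists (fun x _ => x); split; last by split=> // x /fE.
by apply: (@continuous_subspace_uncurry _ _ _ _ _ (fun x _ => x)) => ?; exact: cvg_fst.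
Qed.

Definition strict_epigraph {R : realType} {X : Type} (A : set X) (g : X -> R) :
  set (X * R) := [set p | A p.1 /\ g p.1 < p.2].

Section StrictEpigraph.
Variables (R : realType) (X : topologicalType) (A : set X) (g : X -> R) (c : R).

Definition vertical_homotopy (p : X * R) (s : R) : X * R :=
  (p.1, (1 - s) * c + s * p.2).

Lemma continuous_vertical_homotopy :
  continuous (fun q : (X * R) * R => vertical_homotopy q.1 q.2).
Proof.
apply: continuous_pair => q.
  by apply: (continuous_comp (f := fst) (g := fst)); exact: cvg_fst.
apply: cvgD; apply: cvgM.
- by apply: cvgB; [exact: cvg_cst | exact: cvg_snd].
- exact: cvg_cst.
- exact: cvg_snd.
- by apply: (continuous_comp (f := fst) (g := snd)); [exact: cvg_fst | exact: cvg_snd].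
Qed.

Hypothesis g_lt_c : forall x, A x -> g x < c.

Lemma strict_epigraph_retract_homotopic_id :
  @homotopic_on R _ _ (strict_epigraph A g) (strict_epigraph A g) (fun p => (p.1, c)) id.
Proof.
exists vertical_homotopy; split.
  exact: continuous_subspace_uncurry continuous_vertical_homotopy.
split.
  move=> [x t] s [/= Ax gx_lt_t] s01; split=> //=.
  by apply: ltr_conv; [exact: g_lt_c | exact: gx_lt_t | exact: s01].
move=> [x t] _; rewrite /vertical_homotopy /=.
by rewrite subr0 mul1r mul0r addr0 subrr mul0r add0r mul1r.
Qed.

Lemma level_strict_epigraph_homotopy_equivalence :
  homotopy_equivalence_on R (A `*` [set c]) (strict_epigraph A g) id.
Proof.
split; first by move=> [x t] [/= Ax ->]; split=> //; exact: g_lt_c.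
split; first by apply: continuous_continuous_on => ?; exact: cvg_id.
exists (fun p => (p.1, c)); split; first by move=> [x t] [].
split.
  apply/continuous_continuous_on/continuous_pair; first by move=> ?; exact: cvg_fst.
  exact: cst_continuous.
split; last exact: strict_epigraph_retract_homotopic_id.
by apply: homotopic_on_eq_id => -[x t] [_ /= ->].
Qed.

End StrictEpigraph.

Lemma acos_ge0_le_pihalf {R : realType} {x : R} : 0 <= x -> 0 <= acos x <= pi / 2.
Proof.
move=> x_ge0; have pi_pos := pi_gt0 R.
have [x_le1|x_gt1] := leP x 1.
  have [/andP[acos_ge0 acos_lepi] acosK] := @acos_def R x ltac:(apply/andP; split; lra).
  rewrite acos_ge0 leNgt /=; apply/negP => pihalf_lt_acos.
  have pihalf_in : (pi / 2 : R) \in `[0, pi]%R by rewrite in_itv /=; apply/andP; split; lra.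
  have acos_in : acos x \in `[0, pi]%R by rewrite in_itv /= acos_ge0 acos_lepi.
  have := ltr_cos pihalf_in acos_in.
  by rewrite cos_pihalf acosK pihalf_lt_acos ltNge x_ge0.
(* Outside [-1, 1], [acos] returns the default value [0]. *)
rewrite unlock /acos; case: xgetP => [y _ [_ cosy]|_ /=].
  by have := cos_le1 y; rewrite cosy leNgt x_gt1.
apply/andP; split; rewrite /point /=; lra.
Qed.

Section FubiniStudy.
Variables (R : realType) (n : nat).

Lemma fs_dist_ge0 (P Q : cpt R n) : 0 <= fs_dist P Q.
Proof.
have /andP[] := acos_ge0_le_pihalf (sqrtr_ge0 (\tr (P.1 *m Q.1 - P.2 *m Q.2))).
by rewrite /fs_dist; lra.
Qed.

Lemma fs_dist_le_pi (P Q : cpt R n) : fs_dist P Q <= pi.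
Proof.
have /andP[] := acos_ge0_le_pihalf (sqrtr_ge0 (\tr (P.1 *m Q.1 - P.2 *m Q.2))).
by rewrite /fs_dist; lra.
Qed.

Lemma dist_D_le_pi (x y : cpt R n) : dist_D x y <= pi.
Proof.
rewrite /dist_D; have [[z Dz]|D0] := pselect (exists z, Dset y z).
  have lb : has_lbound [set fs_dist x z | z in Dset y].
    by exists 0 => _ [w _ <-]; exact: fs_dist_ge0.
  exact: le_trans (ge_inf lb (ex_intro2 _ _ z Dz erefl)) (fs_dist_le_pi x z).
suff -> : [set fs_dist x z | z in Dset y] = set0 by rewrite inf0 pi_ge0.
by apply/seteqP; split=> // r [z Dz _]; apply: D0; exists z.
Qed.

End FubiniStudy.

Theorem lemma4p2 (R : realType) (n : nat) (hn : (0 < n)%N)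
    (i : nat) (hi : (0 < i)%N) (eps : R) (heps : 0 < eps) :
  homotopy_equivalence_on R (slice R n (i%:R * pi + eps)) (Zset R n i) id.
Proof.
pose d (p : cpt R n * cpt R n) := if odd i then fs_dist p.1 p.2 else dist_D p.1 p.2.
have d_le_pi p : d p <= pi.
  by rewrite /d; case: ifP => _; [exact: fs_dist_le_pi | exact: dist_D_le_pi].
have -> : slice R n (i%:R * pi + eps) = (CP R n `*` CP R n) `*` [set i%:R * pi + eps].
  by apply/seteqP; split=> -[[x y] t] /=; rewrite /slice /setX /=; tauto.
have -> : Zset R n i = strict_epigraph (CP R n `*` CP R n) (fun p => d p + (i%:R - 1) * pi).
  apply/seteqP; split=> -[[x y] t]; rewrite /Zset /strict_epigraph /d /=;
    by case: ifP => _; rewrite ltrBrDr; tauto.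
apply: level_strict_epigraph_homotopy_equivalence => p _.
by have := d_le_pi p; have := pi_gt0 R; lra.
Qed.
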